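(* For every $k\geq 4$, the groups $\mathrm{FB}_k$ and $\mathrm{PFB}_k$ have trivial virtual centres.
   Context: $\mathrm{FB}_k=\langle \sigma_1,\ldots,\sigma_{k-1}\mid \sigma_i^2=1,\ [\sigma_i,\sigma_j]=1 \text{ whenever } |i-j|\ge 2\rangle$, and $\mathrm{PFB}_k$ is the kernel of the homomorphism $\mathrm{FB}_k\to\mathrm{Sym}(k)$ sending $\sigma_i$ to $(i,i+1)$. The virtual centre $\mathrm{VZ}(G)$ of a group $G$ is the set of elements of $G$ that centralise some finite-index subgroup of $G$. *)

(* The flat braid group FB_k is modelled by its presentation:
   elements are words in the generators sigma_1..sigma_{k-1} (indexed by
   'I_(k.-1), index i standing for sigma_{i+1}), modulo the congruence
   generated by the defining relations.  Since every generator is an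
   involution, the group presented is the monoid presented by the same
   relations; product = concatenation, identity = [::], inverse = rev. *)
From mathcomp Require Import all_boot all_order all_fingroup.
Set Implicit Arguments.
Unset Strict Implicit.
Unset Printing Implicit Defensive.

Definition fbword (k : nat) := seq 'I_(k.-1).

Inductive fbeq (k : nat) : fbword k -> fbword k -> Prop :=
| fbeq_refl w : fbeq w w
| fbeq_sym u v : fbeq u v -> fbeq v u
| fbeq_trans u v w : fbeq u v -> fbeq v w -> fbeq u w
| fbeq_cat u u' v v' : fbeq u u' -> fbeq v v' -> fbeq (u ++ v) (u' ++ v')
| fbeq_invol (i : 'I_(k.-1)) : fbeq [:: i; i] [::]
| fbeq_comm (i j : 'I_(k.-1)) :
    (i.+2 <= j) || (j.+2 <= i) -> fbeq [:: i; j] [:: j; i].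

Definition fbmul k (u v : fbword k) : fbword k := u ++ v.
Definition fbone k : fbword k := [::].
Definition fbinv k (u : fbword k) : fbword k := rev u.

Definition is_subgroup k (H : fbword k -> Prop) : Prop :=
  [/\ forall u v, fbeq u v -> H u -> H v,
      H (fbone k),
      forall u v, H u -> H v -> H (fbmul u v)
    & forall u, H u -> H (fbinv u)].

Definition finite_index_in k (H G : fbword k -> Prop) : Prop :=
  is_subgroup H /\ (forall u, H u -> G u) /\
  exists reps : seq (fbword k),
    forall g, G g -> exists2 r, r \in reps & exists h, H h /\ fbeq g (fbmul r h).

Definition virtual_centre k (G : fbword k -> Prop) (g : fbword k) : Prop :=
  G g /\ exists H : fbword k -> Prop,
    finite_index_in H G /\ forall h, H h -> fbeq (fbmul g h) (fbmul h g).

Definition has_trivial_virtual_centre k (G : fbword k -> Prop) : Prop :=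
  forall g, virtual_centre G g -> fbeq g (fbone k).

Definition FB (k : nat) : fbword k -> Prop := fun _ => True.

(* the homomorphism FB_k -> Sym(k), sigma_{i+1} |-> transposition (i+1, i+2),
   where Sym(k) = {perm 'I_(k.-1).+1} (and (k.-1).+1 = k for k >= 1) *)
Definition gen_perm k (i : 'I_(k.-1)) : {perm 'I_(k.-1).+1} :=
  tperm (widen_ord (leqnSn _) i) (lift ord0 i).

Definition word_perm k (w : fbword k) : {perm 'I_(k.-1).+1} :=
  foldr (fun i p => (gen_perm i * p)%g) 1%g w.

Definition PFB (k : nat) : fbword k -> Prop := fun w => word_perm w = 1%g.

Arguments FB k : clear implicits.
Arguments PFB k : clear implicits.

From Stdlib Require Import ZArith Lia FunctionalExtensionality ClassicalEpsilon.
From mathcomp Require Import all_boot all_order all_fingroup.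
From mathcomp Require Import zify.

(* FB_k is the Coxeter group on the path s_1 - ... - s_(k-1) with all edge
   labels oo; it acts on Z^(k-1) by its Tits representation.  For adjacent
   generators, s_i s_(i+1) acts unipotently with fixed line spanned by the
   isotropic vector e_i + e_(i+1).  Every conjugate h s_i s_(i+1) h^-1 has a
   power in PFB_k, so an element g of either virtual centre commutes with a
   power of it and hence preserves the line h (e_i + e_(i+1)).  Taking h among
   1, s_i, s_(i+2) shows, once k >= 4, that g acts on all e_j by one scalar
   lam.  Positivity of roots (l(ws) > l(w) implies w(e_s) >= 0) then excludes
   lam < 0, since alternating words in two adjacent generators would shorten g
   indefinitely; lam = 0 contradicts invertibility; and lam > 0 means that g
   has no descent, i.e. g = 1. *)

Set Implicit Arguments.
Unset Strict Implicit.
Unset Printing Implicit Defensive.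

Definition vec := nat -> Z.

Definition basisv (i : nat) : vec := fun j => if j == i then 1%Z else 0%Z.
Definition vadd (u v : vec) : vec := fun j => (u j + v j)%Z.
Definition vscale (c : Z) (v : vec) : vec := fun j => (c * v j)%Z.
Definition vpair (s t : nat) (p q : Z) : vec :=
  vadd (vscale p (basisv s)) (vscale q (basisv t)).
Definition nullv (i : nat) : vec := vpair i i.+1 1 1.

(* Vectors are coordinate functions in the basis (e_i) of simple roots.
   [bform i v] is B(e_i, v) for the Tits form: B(e_i, e_i) = 1,
   B(e_i, e_j) = -1 when |i - j| = 1 (Coxeter label oo), 0 otherwise; thus
   [srefl i v = v - 2 B(e_i, v) e_i] only changes coordinate i. *)
Definition bform (i : nat) (v : vec) : Z :=
  (v i - (if i is p.+1 then v p else 0) - v i.+1)%Z.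

Definition srefl (i : nat) (v : vec) : vec :=
  fun j => if j == i then (v i - 2 * bform i v)%Z else v j.

Definition zlinear (F : vec -> vec) : Prop :=
  (forall u v, F (vadd u v) = vadd (F u) (F v)) /\
  (forall c v, F (vscale c v) = vscale c (F v)).

Definition eigenvec (F : vec -> vec) (v : vec) : Prop :=
  exists mu, F v = vscale mu v.

Ltac case_indices :=
  repeat (case: eqP => ?; try subst); try (exfalso; lia); try lia.

Lemma sreflK i : involutive (srefl i).
Proof.
move=> v; apply: functional_extensionality => j; rewrite /srefl /bform.
by case: i => [|i]; case_indices.
Qed.

Lemma srefl_comm i j v : (i.+2 <= j) || (j.+2 <= i) ->
  srefl i (srefl j v) = srefl j (srefl i v).
Proof.
move=> ij; apply: functional_extensionality => x; rewrite /srefl /bform.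
by case: i ij => [|i]; case: j => [|j] ij; case_indices.
Qed.

Lemma srefl_zlinear i : zlinear (srefl i).
Proof.
split=> [u v|c v]; apply: functional_extensionality => x;
  rewrite /srefl /bform /vadd /vscale; case: i => [|i]; case_indices; ring.
Qed.

Lemma zlinear_comp (F G : vec -> vec) : zlinear F -> zlinear G -> zlinear (F \o G).
Proof. by move=> [FD FZ] [GD GZ]; split=> [u v|c v] /=; rewrite ?GD ?FD ?GZ ?FZ. Qed.

Lemma srefl_basisv_far t s : t <> s -> s <> t.+1 -> t <> s.+1 ->
  srefl t (basisv s) = basisv s.
Proof.
move=> ts st1 ts1; apply: functional_extensionality => x.
by rewrite /srefl /bform /basisv; case: t ts st1 ts1 => [|t] *; case_indices.
Qed.

Lemma srefl_basisv s : srefl s (basisv s) = vscale (-1) (basisv s).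
Proof.
apply: functional_extensionality => x; rewrite /srefl /bform /basisv /vscale.
by case: s => [|s]; case_indices.
Qed.

Definition adjacent (s t : nat) : bool := (t == s.+1) || (s == t.+1).

Lemma adjacentC s t : adjacent s t = adjacent t s.
Proof. exact: orbC. Qed.

Lemma srefl_vpair s t p q : adjacent s t ->
  srefl t (vpair s t p q) = vpair t s (2 * p - q) p.
Proof.
move=> /orP[/eqP ->|/eqP ->]; apply: functional_extensionality => x;
  rewrite /srefl /bform /vpair /vadd /vscale /basisv; last case: t => [|t];
  case_indices.
Qed.

Lemma vpairC s t p q : vpair s t p q = vpair t s q p.
Proof. by apply: functional_extensionality => x; rewrite /vpair /vadd; lia. Qed.

Lemma basisv_vpair s t : basisv s = vpair s t 1 0.
Proof. by apply: functional_extensionality => x; rewrite /vpair /vadd /vscale; lia. Qed.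

Lemma srefl_nullv_r i : srefl i.+2 (nullv i) = vadd (nullv i) (vscale 2 (basisv i.+2)).
Proof.
apply: functional_extensionality => x.
by rewrite /srefl /bform /nullv /vpair /vadd /vscale /basisv; case_indices.
Qed.

Lemma srefl_nullv_l i : srefl i (nullv i.+1) = vadd (nullv i.+1) (vscale 2 (basisv i)).
Proof.
apply: functional_extensionality => x.
rewrite /srefl /bform /nullv /vpair /vadd /vscale /basisv.
by case: i => [|i]; case_indices.
Qed.

Definition rot (i : nat) (v : vec) : vec := srefl i (srefl i.+1 v).

Lemma rot_vpair i a b : rot i (vpair i i.+1 a b) = vpair i i.+1 (3 * a - 2 * b) (2 * a - b).
Proof.
apply: functional_extensionality => x.
rewrite /rot /srefl /bform /vpair /vadd /vscale /basisv.
by case: i => [|i]; case_indices.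
Qed.

Lemma iter_rot_vpair m i a b : iter m (rot i) (vpair i i.+1 a b) =
  vpair i i.+1 (a + 2 * Z.of_nat m * (a - b)) (b + 2 * Z.of_nat m * (a - b)).
Proof.
elim: m => [|m IH]; first by congr vpair; lia.
by rewrite iterS IH rot_vpair; congr vpair; lia.
Qed.

Lemma iter_rot_far m i v j : j <> i -> j <> i.+1 -> iter m (rot i) v j = v j.
Proof.
move=> ji ji1; elim: m => [|m IH] //=.
by rewrite /rot {1}/srefl; case: eqP => // _; rewrite /srefl; case: eqP.
Qed.

(* (rot i)^N - 1 has image the line through the isotropic vector [nullv i],
   and a map commuting with (rot i)^N preserves that image. *)
Lemma eigenvec_nullv_of_commute (M : vec -> vec) i N : 0 < N -> zlinear M ->
  (forall v, M (iter N (rot i) v) = iter N (rot i) (M v)) ->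
  eigenvec M (nullv i).
Proof.
move=> N_gt0 [MD MZ] MC.
have fix_nullv : iter N (rot i) (nullv i) = nullv i.
  by rewrite /nullv iter_rot_vpair; congr vpair; lia.
have move_basisv : iter N (rot i) (basisv i) =
    vadd (basisv i) (vscale (2 * Z.of_nat N) (nullv i)).
  rewrite (basisv_vpair i i.+1) iter_rot_vpair; apply: functional_extensionality => x.
  by rewrite /nullv /vpair /vadd /vscale /basisv; case_indices.
have Mbasis := MC (basisv i); rewrite move_basisv MD MZ in Mbasis.
have Mnull_far j : j <> i -> j <> i.+1 -> M (nullv i) j = 0%Z.
  move=> ji ji1; have := congr1 (fun f => f j) Mbasis.
  cbv beta; rewrite iter_rot_far // /vadd /vscale; nia.
have [a [b Mnull]] : exists a b, M (nullv i) = vpair i i.+1 a b.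
  exists (M (nullv i) i), (M (nullv i) i.+1).
  apply: functional_extensionality => x; rewrite /vpair /vadd /vscale /basisv.
  case: eqP => [->|xi]; case: eqP => [xi1|xi1]; try subst x; try lia.
  by rewrite Mnull_far //; lia.
have := congr1 (fun f => f i) (MC (nullv i)).
rewrite fix_nullv Mnull iter_rot_vpair /vpair /vadd /vscale /basisv eqxx.
have -> : (i == i.+1) = false by lia.
move=> ab; have ba : b = a by nia.
exists a; rewrite Mnull ba; apply: functional_extensionality => x.
by rewrite /nullv /vpair /vadd /vscale; ring.
Qed.

Lemma vscale_basisv_inj i a b : vscale a (basisv i) = vscale b (basisv i) -> a = b.
Proof. by move=> /(congr1 (fun f => f i)); rewrite /vscale /basisv eqxx; lia. Qed.

(* Four eigenvectors in span(e_i, e_(i+1), e_(i+2)), any three of them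
   independent, force F to be scalar there. *)
Lemma scalar_on_window (F : vec -> vec) i : zlinear F ->
  eigenvec F (nullv i) -> eigenvec F (nullv i.+1) ->
  eigenvec F (srefl i.+2 (nullv i)) -> eigenvec F (srefl i (nullv i.+1)) ->
  exists lam, [/\ F (basisv i) = vscale lam (basisv i),
    F (basisv i.+1) = vscale lam (basisv i.+1)
    & F (basisv i.+2) = vscale lam (basisv i.+2)].
Proof.
move=> [FD FZ] [m1 E1] [m2 E2] [m3 E3] [m4 E4].
rewrite srefl_nullv_r in E3; rewrite srefl_nullv_l in E4.
rewrite /nullv /vpair !FD !FZ in E1 E2 E3 E4.
have coord j (u v : vec) : u = v -> u j = v j by move->.
have [m21 m31 m41] : [/\ m2 = m1, m3 = m1 & m4 = m1].
  have [n1 n2 n3] : [/\ (i == i.+1) = false, (i == i.+2) = false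
    & (i.+1 == i.+2) = false] by split; lia.
  have [n4 n5 n6] : [/\ (i.+1 == i) = false, (i.+2 == i) = false
    & (i.+2 == i.+1) = false] by split; lia.
  move: (coord i _ _ E1) (coord i.+1 _ _ E1) (coord i.+2 _ _ E1).
  move: (coord i _ _ E2) (coord i.+1 _ _ E2) (coord i.+2 _ _ E2).
  move: (coord i _ _ E3) (coord i.+1 _ _ E3) (coord i.+2 _ _ E3).
  move: (coord i _ _ E4) (coord i.+1 _ _ E4) (coord i.+2 _ _ E4).
  rewrite /vadd /vscale /basisv !eqxx n1 n2 n3 n4 n5 n6 => *; split; lia.
subst m2 m3 m4; exists m1.
split; apply: functional_extensionality => j;
  move: (coord j _ _ E1) (coord j _ _ E2) (coord j _ _ E3) (coord j _ _ E4);
  rewrite /vadd /vscale; lia.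
Qed.

Lemma scalar_of_windows (F : vec -> vec) n : 2 < n ->
  (forall i, i.+2 < n -> exists lam, [/\ F (basisv i) = vscale lam (basisv i),
    F (basisv i.+1) = vscale lam (basisv i.+1)
    & F (basisv i.+2) = vscale lam (basisv i.+2)]) ->
  exists lam, forall j, j < n -> F (basisv j) = vscale lam (basisv j).
Proof.
move=> n_gt2 window; have [lam [F0 _ _]] := window 0 n_gt2; exists lam.
suff upto i : i.+2 < n -> forall j, j <= i.+2 -> F (basisv j) = vscale lam (basisv j).
  move=> j jn; case: (leqP j 2) => j2; first exact: (upto 0).
  by apply: (upto (j - 2)); lia.
elim: i => [|i IH] i2n j ji.
  have [l [G0 G1 G2]] := window 0 i2n.
  have -> : lam = l by apply: (@vscale_basisv_inj 0); rewrite -F0 -G0.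
  by case: j ji => [|[|[|j]]] //; lia.
have [l [G0 _ G2]] := window i.+1 i2n.
have l_lam : l = lam.
  by apply: (@vscale_basisv_inj i.+1); rewrite -G0 IH //; lia.
case: (leqP j i.+2) => [ji2|ji2]; first by apply: IH => //; lia.
have -> : j = i.+3 by lia.
by rewrite G2 l_lam.
Qed.

Fixpoint alt_word (T : Type) (s t : T) (j : nat) : seq T :=
  if j is j'.+1 then rcons (alt_word t s j') t else [::].

Definition wpow (T : Type) (w : seq T) (m : nat) : seq T := flatten (nseq m w).

Lemma wpowD (T : Type) (w : seq T) a b : wpow w (a + b) = wpow w a ++ wpow w b.
Proof. by rewrite /wpow nseqD flatten_cat. Qed.

Lemma iter_mul (T : Type) (f : T -> T) c m x :
  iter m (iter c f) x = iter (c * m) f x.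
Proof. by elim: m => [|m IH]; rewrite ?muln0 // iterS IH mulnS iterD. Qed.

Lemma iter_conj (T : Type) (f g F : T -> T) j x : cancel f g -> cancel g f ->
  iter j (fun y => f (F (g y))) x = f (iter j F (g x)).
Proof. by move=> fK gK; elim: j => [|j IH] /=; rewrite ?gK // IH fK. Qed.

Section Words.
Variable k : nat.
Local Notation word := (fbword k).
Local Notation gen := 'I_k.-1.

Lemma fbeq_catl (u u' v : word) : fbeq u u' -> fbeq (u ++ v) (u' ++ v).
Proof. by move=> uu'; apply: fbeq_cat uu' (fbeq_refl v). Qed.

Lemma fbeq_catr (u v v' : word) : fbeq v v' -> fbeq (u ++ v) (u ++ v').
Proof. exact: fbeq_cat (fbeq_refl u). Qed.

Lemma fbeq_rcons (u w : word) s : fbeq u w -> fbeq (rcons u s) (rcons w s).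
Proof. by rewrite -!cats1; apply: fbeq_catl. Qed.

Lemma fbeq_rcons2 (w : word) s : fbeq (rcons (rcons w s) s) w.
Proof.
rewrite -!cats1 -catA; have := fbeq_catr w (fbeq_invol s).
by rewrite cats0.
Qed.

Lemma fbeq_rev (u w : word) : fbeq u w -> fbeq (rev u) (rev w).
Proof.
elim=> [? | ? ? _ | ? ? ? _ IH1 _ IH2 | ? ? ? ? _ IH1 _ IH2 | i | i j ij].
- exact: fbeq_refl.
- exact: fbeq_sym.
- exact: fbeq_trans IH1 IH2.
- by rewrite !rev_cat; apply: fbeq_cat.
- exact: fbeq_invol.
- by apply: fbeq_comm; rewrite orbC.
Qed.

Lemma fbeq_revK (h u : word) : fbeq (rev h ++ h ++ u) u.
Proof.
elim: h => [|c h IH] /=; first exact: fbeq_refl.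
rewrite rev_cons -cats1 -catA; apply: fbeq_trans IH.
exact: fbeq_catr (fbeq_catl (h ++ u) (fbeq_invol c)).
Qed.

Lemma odd_size_fbeq (u w : word) : fbeq u w -> odd (size u) = odd (size w).
Proof.
elim=> // [? ? ? _ -> _ -> | ? ? ? ? _ IH1 _ IH2] //.
by rewrite !size_cat !oddD IH1 IH2.
Qed.

Definition wact (w : word) (v : vec) : vec := foldr (fun i : gen => srefl i) v w.

Lemma wact_cat (u w : word) v : wact (u ++ w) v = wact u (wact w v).
Proof. by rewrite /wact foldr_cat. Qed.

Lemma wact_rcons (w : word) s v : wact (rcons w s) v = wact w (srefl s v).
Proof. by rewrite -cats1 wact_cat. Qed.

Lemma wact_fbeq (u w : word) : fbeq u w -> wact u = wact w.
Proof.
elim=> // [? ? ? _ -> _ -> | ? ? ? ? _ IH1 _ IH2 | i | i j ij] //.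
- by apply: functional_extensionality => v; rewrite !wact_cat IH1 IH2.
- by apply: functional_extensionality => v /=; rewrite sreflK.
- by apply: functional_extensionality => v /=; rewrite srefl_comm.
Qed.

Lemma wact_zlinear (w : word) : zlinear (wact w).
Proof.
split=> [u v|c v]; elim: w => //= i w ->; by case: (srefl_zlinear i).
Qed.

Lemma wact_revK (h : word) : cancel (wact h) (wact (rev h)).
Proof. by elim: h => //= c h IH v; rewrite rev_cons wact_rcons sreflK IH. Qed.

Lemma wact_Krev (h : word) : cancel (wact (rev h)) (wact h).
Proof. by move=> v; rewrite -{1}(revK h) wact_revK. Qed.

Definition has_rep_of_size (w : word) : pred nat :=
  fun m => excluded_middle_informative (exists2 u, fbeq u w & size u = m).

Lemma has_rep_size (w : word) : exists m, has_rep_of_size w m.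
Proof. by exists (size w); apply/sumboolP; exists w => //; apply: fbeq_refl. Qed.

Definition fblen (w : word) : nat := ex_minn (has_rep_size w).

Lemma fblen_min (u w : word) : fbeq u w -> fblen w <= size u.
Proof.
by move=> uw; rewrite /fblen; case: ex_minnP => m _; apply; apply/sumboolP; exists u.
Qed.

Lemma fblen_witness (w : word) : exists2 u, fbeq u w & size u = fblen w.
Proof. by rewrite /fblen; case: ex_minnP => m /sumboolP. Qed.

Lemma fblen_size (w : word) : fblen w <= size w.
Proof. exact/fblen_min/fbeq_refl. Qed.

Lemma fblen_fbeq (u w : word) : fbeq u w -> fblen u = fblen w.
Proof.
move=> uw; apply/eqP; rewrite eqn_leq; apply/andP; split.
- have [w' w'w <-] := fblen_witness w.
  by apply: fblen_min; apply: fbeq_trans w'w (fbeq_sym uw).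
- have [u' u'u <-] := fblen_witness u.
  by apply: fblen_min; apply: fbeq_trans u'u uw.
Qed.

Lemma fblen_cat (u w : word) : fblen (u ++ w) <= fblen u + fblen w.
Proof.
have [u' u'u <-] := fblen_witness u; have [w' w'w <-] := fblen_witness w.
by rewrite -size_cat; apply/fblen_min/fbeq_cat.
Qed.

Lemma fblen_rcons (w : word) s : fblen (rcons w s) <= (fblen w).+1.
Proof. by rewrite -cats1 -addn1; apply: leq_trans (fblen_cat _ _) (leq_add _ (fblen_size _)). Qed.

Lemma fblen_rcons_ge (w : word) s : fblen w <= (fblen (rcons w s)).+1.
Proof. by rewrite -{1}(fblen_fbeq (fbeq_rcons2 w s)); apply: fblen_rcons. Qed.

Lemma fblen_eq0 (w : word) : fblen w = 0 -> fbeq w [::].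
Proof.
move=> w0; have [u uw] := fblen_witness w; rewrite w0 => /size0nil u0.
by rewrite u0 in uw; apply: fbeq_sym.
Qed.

Lemma fblen_rcons_neq (w : word) s : fblen (rcons w s) != fblen w.
Proof.
have parity (u : word) : odd (fblen u) = odd (size u).
  by have [u' u'u <-] := fblen_witness u; apply: odd_size_fbeq.
by apply/eqP => /(congr1 odd); rewrite !parity size_rcons /=; case: (odd _).
Qed.

Definition ascent (w : word) (s : gen) : bool := fblen w < fblen (rcons w s).

Lemma ascentN (w : word) s : ~~ ascent w s -> fblen (rcons w s) < fblen w.
Proof. by rewrite /ascent -leqNgt leq_eqVlt (negbTE (fblen_rcons_neq w s)). Qed.

Lemma ascent_rcons (w : word) s : ~~ ascent w s -> ascent (rcons w s) s.
Proof. by move/ascentN; rewrite /ascent (fblen_fbeq (fbeq_rcons2 w s)). Qed.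

Lemma exists_descent (w : word) : 0 < fblen w -> exists s, ~~ ascent w s.
Proof.
move=> w_gt0; have [u uw u_len] := fblen_witness w.
case/lastP: u uw u_len => [|u s] uw u_len; first by rewrite -u_len in w_gt0.
exists s; rewrite /ascent -leqNgt -u_len size_rcons; apply: leqW.
apply: fblen_min; apply: fbeq_trans (fbeq_sym (fbeq_rcons2 u s)) _.
by rewrite -!cats1 in uw *; apply: fbeq_catl.
Qed.

Definition reduced (w : word) : Prop := fblen w = size w.

End Words.

Section Positivity.
Variable k : nat.
Local Notation word := (fbword k).
Local Notation gen := 'I_k.-1.

Lemma wact_alt_word j (s t : gen) : adjacent s t -> forall p q, (0 <= q < p)%Z ->
  exists a b, [/\ (0 <= a)%Z, (0 <= b)%Z, (0 < a + b)%Z &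
    wact (alt_word s t j) (vpair s t p q) = vpair s t a b].
Proof.
elim: j s t => [|j IH] s t st p q qp /=; first by exists p, q; split=> //; lia.
rewrite wact_rcons srefl_vpair //.
have pq : (0 <= p < 2 * p - q)%Z by lia.
have [a [b [a_ge0 b_ge0 ab_gt0 ->]]] := IH t s (etrans (adjacentC t s) st) _ _ pq.
by exists b, a; split; [lia | lia | lia | apply: vpairC].
Qed.

Lemma reduced_rcons (x : word) c : reduced (rcons x c) -> reduced x.
Proof.
move=> xc; apply/eqP; rewrite eqn_leq fblen_size /=.
by have := fblen_rcons x c; rewrite xc size_rcons ltnS.
Qed.

Lemma reduced_ascent_last (x : word) c s :
  reduced (rcons x c) -> ascent (rcons x c) s -> c != s.
Proof.
move=> xc; apply: contraL => /eqP <-.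
rewrite /ascent -leqNgt (fblen_fbeq (fbeq_rcons2 x c)) xc size_rcons.
exact: leqW (fblen_size x).
Qed.

Lemma last_pred2 (x : word) c s t : all (pred2 s t) (rcons x c) -> c != s ->
  c = t /\ all (pred2 s t) x.
Proof.
rewrite all_rcons => /andP[/orP[/eqP -> | /eqP ->] xst]; last by [].
by rewrite eqxx.
Qed.

Lemma reduced_alt_word (x : word) (s t : gen) : adjacent s t ->
  all (pred2 s t) x -> reduced x -> ascent x s -> x = alt_word s t (size x).
Proof.
elim/last_ind: x s t => [//|x c IH] s t st xst xred xs.
have [ct xst'] := last_pred2 xst (reduced_ascent_last xred xs); subst c.
rewrite size_rcons /= -IH //.
- by rewrite adjacentC.
- by apply: sub_all xst' => c; rewrite /= orbC.
- exact: reduced_rcons xred.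
- by rewrite /ascent xred (reduced_rcons xred) size_rcons.
Qed.

Lemma reduced_far_fixes (x : word) (s t : gen) : (s.+2 <= t) || (t.+2 <= s) ->
  all (pred2 s t) x -> reduced x -> ascent x s -> wact x (basisv s) = basisv s.
Proof.
elim/last_ind: x => [//|x c IH] st xst xred xs.
have [ct xst'] := last_pred2 xst (reduced_ascent_last xred xs); subst c.
have xred' := reduced_rcons xred.
have xs' : ascent x s.
  have swap : fbeq (rcons (rcons x t) s) (rcons (rcons x s) t).
    by rewrite -!cats1 -!catA; apply/fbeq_catr/fbeq_comm; rewrite orbC.
  move: xs; rewrite /ascent (fblen_fbeq swap) xred size_rcons xred'.
  by have := fblen_rcons (rcons x s) t; lia.
rewrite wact_rcons srefl_basisv_far; first exact: IH.
all: by move: st; lia.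
Qed.

Lemma wact_dihedral_basisv (x : word) (s t : gen) : s != t ->
  all (pred2 s t) x -> reduced x -> ascent x s ->
  exists a b, [/\ (0 <= a)%Z, (0 <= b)%Z & wact x (basisv s) = vpair s t a b].
Proof.
move=> st xst xred xs; case: (boolP ((s.+2 <= t) || (t.+2 <= s))) => [far|near].
  by exists 1%Z, 0%Z; rewrite (reduced_far_fixes far xst xred xs) -basisv_vpair.
have adj : adjacent s t by move: st near; rewrite /adjacent -val_eqE /=; lia.
rewrite (reduced_alt_word adj xst xred xs) (basisv_vpair s t).
have [|a [b [a_ge0 b_ge0 _ ->]]] := wact_alt_word (size x) adj (p := 1) (q := 0).
  by [].
by exists a, b.
Qed.

(* The factorisation w = v x from the proof of Humphreys, Reflection Groups
   and Coxeter Groups, Thm 5.4, with x of maximal length in <s, t>. *)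
Lemma parabolic_factor (w : word) (s t : gen) : ~~ ascent w t ->
  exists v x : word, [/\ all (pred2 s t) x, fbeq w (v ++ x),
    fblen w = fblen v + size x, 0 < size x & ascent v s && ascent v t].
Proof.
move=> wt.
pose Q : pred nat := fun m => excluded_middle_informative (exists v x : word,
  [/\ all (pred2 s t) x, fbeq w (v ++ x), fblen w = fblen v + size x & size x = m]).
have Q1 : Q 1.
  apply/sumboolP; exists (rcons w t), [:: t]; split=> //=.
  - by rewrite /= eqxx orbT.
  - by rewrite cats1; apply/fbeq_sym/fbeq_rcons2.
  - by have := ascentN wt; have := fblen_rcons_ge w t; lia.
have Qbound m : Q m -> m <= fblen w.
  by move=> /sumboolP [v [x [_ _ -> <-]]]; apply: leq_addl.
case: (ex_maxnP (ex_intro _ 1 Q1) Qbound) => m /sumboolP [v [x [xst wvx w_len x_m]]].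
move=> maxm; exists v, x; split=> //; first by rewrite x_m; apply: maxm.
suff asc c : pred2 s t c -> ascent v c by rewrite !asc //= eqxx ?orbT.
move=> c_st; apply: contraT => /ascentN vc.
have : m.+1 <= m.
  apply: maxm; apply/sumboolP; exists (rcons v c), (c :: x); split=> /=.
  - by apply/andP.
  - rewrite -cat_rcons; apply: fbeq_trans wvx _.
    exact/fbeq_catl/fbeq_sym/fbeq_rcons2.
  - by have := fblen_rcons_ge v c; lia.
  - by rewrite x_m.
by rewrite ltnn.
Qed.

Theorem wact_basisv_ge0 (w : word) (s : gen) :
  ascent w s -> forall j, (0 <= wact w (basisv s) j)%Z.
Proof.
have [N] := ubnP (fblen w); elim: N w s => // N IH w s wN ws j.
case: (posnP (fblen w)) => [w0|w_gt0].
  by rewrite (wact_fbeq (fblen_eq0 w0)) /= /basisv; case: eqP.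
have [t wt] := exists_descent w_gt0.
have st : s != t by apply: contraNneq wt => <-.
have [v [x [xst wvx w_len x_gt0 /andP[vs vt]]]] := parabolic_factor s wt.
have v_lt : fblen v < N by lia.
have xred : reduced x.
  apply/eqP; rewrite eqn_leq fblen_size /=.
  by have := fblen_cat v x; rewrite -(fblen_fbeq wvx); lia.
have xs : ascent x s.
  apply: contraT => /ascentN xs.
  have := fblen_cat v (rcons x s); rewrite -rcons_cat -(fblen_fbeq (fbeq_rcons s wvx)).
  by move: ws xred; rewrite /ascent /reduced; lia.
have [a [b [a_ge0 b_ge0 xe]]] := wact_dihedral_basisv st xst xred xs.
case: (wact_zlinear v) => vD vZ.
rewrite (wact_fbeq wvx) wact_cat xe /vpair vD !vZ /vadd /vscale.
by have := IH v s v_lt vs j; have := IH v t v_lt vt j; nia.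
Qed.

Lemma wact_basisv_le0 (w : word) (s : gen) :
  ~~ ascent w s -> forall j, (wact w (basisv s) j <= 0)%Z.
Proof.
move=> /ascent_rcons ws j; have := wact_basisv_ge0 (j := j) ws.
by rewrite wact_rcons srefl_basisv; case: (wact_zlinear w) => _ ->; rewrite /vscale; lia.
Qed.

End Positivity.

Section Centraliser.
Variable k : nat.
Local Notation word := (fbword k).
Local Notation gen := 'I_k.-1.

Lemma wact_wpow (w : word) m : wact (wpow w m) =1 iter m (wact w).
Proof. by rewrite /wpow; elim: m => //= m IH v; rewrite wact_cat IH. Qed.

Lemma word_perm_cat (u w : word) : word_perm (u ++ w) = (word_perm u * word_perm w)%g.
Proof. by elim: u => [|c u IH] /=; rewrite ?mul1g // IH mulgA. Qed.

Lemma word_perm_wpow (w : word) m : word_perm (wpow w m) = (word_perm w ^+ m)%g.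
Proof. by rewrite /wpow; elim: m => //= m IH; rewrite word_perm_cat IH expgS. Qed.

Definition centralises_powers (X : word -> Prop) (g : word) : Prop :=
  forall x, X x -> exists2 m, 0 < m & fbeq (g ++ wpow x m) (wpow x m ++ g).

(* y = h s_i s_(i+1) h^-1 has a power in PFB_k, and g commutes with a power
   of that, i.e. with h (rot i)^N h^-1 for some N > 0. *)
Lemma eigenvec_conj_nullv (g : word) : centralises_powers (PFB k) g ->
  forall (h : word) i, i.+1 < k.-1 -> eigenvec (wact g) (wact h (nullv i)).
Proof.
move=> gP h i i1n.
pose y : word := h ++ [:: Ordinal (ltnW i1n); Ordinal i1n] ++ rev h.
pose c := #[word_perm y]%g.
have [m m_gt0 gX] : exists2 m, 0 < m &
    fbeq (g ++ wpow (wpow y c) m) (wpow (wpow y c) m ++ g).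
  by apply: gP; rewrite /PFB word_perm_wpow expg_order.
set X := wpow (wpow y c) m in gX.
have X_rot u : wact (rev h) (wact X (wact h u)) = iter (c * m) (rot i) u.
  rewrite wact_wpow (eq_iter (wact_wpow y c)) iter_mul.
  rewrite (eq_iter (f' := fun v => wact h (rot i (wact (rev h) v)))); last first.
    by move=> v; rewrite /y !wact_cat.
  by rewrite (iter_conj (rot i) _ _ (wact_revK h) (wact_Krev h)) !wact_revK.
have gXC u : wact g (wact X u) = wact X (wact g u) by rewrite -!wact_cat (wact_fbeq gX).
pose M := wact (rev h) \o wact g \o wact h.
have MC v : M (iter (c * m) (rot i) v) = iter (c * m) (rot i) (M v).
  by rewrite -!X_rot /M /= wact_Krev gXC wact_Krev.
have M_lin : zlinear M by do 2?apply: zlinear_comp; apply: wact_zlinear.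
have N_gt0 : 0 < c * m by rewrite muln_gt0 order_gt0.
have [mu Mmu] := eigenvec_nullv_of_commute N_gt0 M_lin MC.
exists mu; move: (congr1 (wact h) Mmu); rewrite /M /= !wact_Krev => ->.
by case: (wact_zlinear h) => _ ->.
Qed.

Lemma wact_scalar (g : word) : centralises_powers (PFB k) g -> 2 < k.-1 ->
  exists lam, forall j, j < k.-1 -> wact g (basisv j) = vscale lam (basisv j).
Proof.
move=> gP kn; apply: scalar_of_windows kn _ => i i2n.
have i1n : i.+1 < k.-1 := ltnW i2n.
have i0n : i < k.-1 := ltnW i1n.
apply: scalar_on_window (wact_zlinear g) _ _ _ _.
- exact (eigenvec_conj_nullv gP [::] i1n).
- exact (eigenvec_conj_nullv gP [::] i2n).
- exact (eigenvec_conj_nullv gP [:: Ordinal i2n] i1n).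
- exact (eigenvec_conj_nullv gP [:: Ordinal i0n] i2n).
Qed.

(* g x maps e_(s') to a negative multiple of a positive root, so the next
   letter is always a descent. *)
Lemma fblen_cat_alt_word (g : word) lam (s s' : gen) : (lam < 0)%Z ->
  adjacent s s' -> wact g (basisv s) = vscale lam (basisv s) ->
  wact g (basisv s') = vscale lam (basisv s') ->
  forall t, fblen (g ++ alt_word s s' t) + t <= fblen g.
Proof.
move=> lam_lt0 + + + t; elim: t s s' => [|t IH] s s' ss' gs gs'.
  by rewrite cats0 addn0.
have := IH s' s _ gs' gs; rewrite adjacentC => /(_ ss').
rewrite /= -rcons_cat; set w := g ++ alt_word s' s t => w_len.
suff : fblen (rcons w s') < fblen w by lia.
apply: ascentN; apply/negP => ws'.
have [|a [b [a_ge0 b_ge0 ab_gt0 alt_e]]] :=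
  wact_alt_word t (etrans (adjacentC s' s) ss') (p := 1) (q := 0); first lia.
have w_e : wact w (basisv s') = vpair s' s (lam * a) (lam * b).
  case: (wact_zlinear g) => gD gZ.
  rewrite /w wact_cat (basisv_vpair s' s) alt_e /vpair gD !gZ gs gs'.
  by apply: functional_extensionality => x; rewrite /vadd /vscale; ring.
have [ne1 ne2] : (nat_of_ord s == s') = false /\ (nat_of_ord s' == s) = false.
  by move: ss'; rewrite /adjacent; split; lia.
have := wact_basisv_ge0 (j := s) ws'; have := wact_basisv_ge0 (j := s') ws'.
rewrite w_e /vpair /vadd /vscale /basisv !eqxx ne1 ne2; nia.
Qed.

Lemma scalar_wact_trivial (g : word) lam : 1 < k.-1 ->
  (forall j, j < k.-1 -> wact g (basisv j) = vscale lam (basisv j)) -> fbeq g [::].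
Proof.
move=> kn glam; have g0 := glam 0 (ltnW kn); have g1 := glam 1 kn.
case: (Z.lt_total lam 0) => [lam_lt0|[lam0|lam_gt0]].
- have := fblen_cat_alt_word (s := Ordinal (ltnW kn)) (s' := Ordinal kn)
    lam_lt0 isT g0 g1 (fblen g).+1.
  lia.
- have := wact_revK g (basisv 0); rewrite g0 lam0.
  case: (wact_zlinear (rev g)) => _ -> /(congr1 (fun f => f 0)).
  by rewrite /vscale /basisv.
- case: (posnP (fblen g)) => [/fblen_eq0 // | g_gt0].
  have [s gs] := exists_descent g_gt0.
  by have := wact_basisv_le0 (j := s) gs; rewrite glam // /vscale /basisv eqxx; lia.
Qed.

Lemma centralises_powers_PFB_trivial (g : word) : 2 < k.-1 ->
  centralises_powers (PFB k) g -> fbeq g [::].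
Proof.
move=> kn gP; have [lam glam] := wact_scalar gP kn.
exact: scalar_wact_trivial (ltnW kn) glam.
Qed.

End Centraliser.

Section VirtualCentre.
Variable k : nat.
Local Notation word := (fbword k).

Lemma subgroup_wpow_sub (H : word -> Prop) (x r h1 h2 : word) a b :
  is_subgroup H -> a <= b -> H h1 -> H h2 ->
  fbeq (wpow x a) (r ++ h1) -> fbeq (wpow x b) (r ++ h2) -> H (wpow x (b - a)).
Proof.
case=> Hfbeq _ Hmul Hinv ab Hh1 Hh2 xa.
rewrite -(subnKC ab) wpowD addKn => xb.
apply: (Hfbeq (rev h1 ++ h2)); last exact: Hmul (Hinv _ Hh1) Hh2.
apply: fbeq_sym; apply: fbeq_trans (fbeq_sym (fbeq_revK (wpow x a) _)) _.
apply: fbeq_trans (fbeq_cat (fbeq_rev xa) xb) _.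
by rewrite rev_cat -catA; apply/fbeq_catr/fbeq_revK.
Qed.

Lemma finite_index_wpow (H G : word -> Prop) (x : word) :
  finite_index_in H G -> (forall m, G (wpow x m)) -> exists2 m, 0 < m & H (wpow x m).
Proof.
case=> Hsub [_ [reps reps_cover]] Gx.
have cover (j : 'I_(size reps).+1) : exists o : 'I_(size reps),
    exists2 h, H h & fbeq (wpow x j) (nth [::] reps o ++ h).
  have [r r_in [h [Hh xr]]] := reps_cover _ (Gx j).
  have r_idx : index r reps < size reps by rewrite index_mem.
  by exists (Ordinal r_idx), h; rewrite //= nth_index.
have [f fP] := choice _ cover.
have collide (a b : 'I__) : a < b -> f a = f b -> exists2 m, 0 < m & H (wpow x m).
  move=> ab fab; have [h1 Hh1 xa] := fP a; have [h2 Hh2 xb] := fP b.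
  exists (b - a); first by rewrite subn_gt0.
  by apply: subgroup_wpow_sub Hsub (ltnW ab) Hh1 Hh2 _ xb; rewrite -fab.
have : ~~ injectiveb f.
  by apply/negP => /injectiveP /leq_card; rewrite !card_ord ltnn.
case/injectivePn => a [b ab fab]; case: (ltngtP a b) => [lt|gt|eq].
- exact: collide lt fab.
- exact: collide gt (esym fab).
- by move: ab; rewrite (val_inj eq) eqxx.
Qed.

Lemma virtual_centre_centralises_powers (G X : word -> Prop) (g : word) :
  virtual_centre G g -> (forall x m, X x -> G (wpow x m)) -> centralises_powers X g.
Proof.
case=> _ [H [Hfin Hcomm]] XG x Xx.
have [m m_gt0 Hxm] := finite_index_wpow Hfin (fun m => XG x m Xx).
by exists m => //; apply: Hcomm.
Qed.

End VirtualCentre.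

Theorem corollary2p15 (k : nat) (hk : 4 <= k) :
  has_trivial_virtual_centre (FB k) /\ has_trivial_virtual_centre (PFB k).
Proof.
have kn : 2 < k.-1 by lia.
have PFB_wpow x m : PFB k x -> PFB k (wpow x m).
  by rewrite /PFB word_perm_wpow => ->; rewrite expg1n.
split=> g gV; apply: (centralises_powers_PFB_trivial kn).
- exact: virtual_centre_centralises_powers gV _.
- exact: virtual_centre_centralises_powers gV PFB_wpow.
Qed.
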